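(* Let $M\in\mathbb{R}^{n\times n}$ be real symmetric with spectral decomposition $M=\sum_{i=1}^n\lambda_iu_iu_i^T$, $\lambda_1>\cdots>\lambda_n$ distinct, $u_i$ orthonormal. Let $p\in(0,1)$, let $Q$ be the random symmetric matrix with independent entries $Q_{ij}$ ($i\le j$) equal to $1/p$ with probability $p$ and $0$ otherwise, and $E=M\circ Q-M$. Let $R=\sum_{j\ne1}\frac{1}{\lambda_j-\lambda_1}u_ju_j^T$ be the reduced resolvent of $M$ associated with $u_1$. Let $w_1=u_1\circ u_1$, $\mathcal{M}=M\circ M$, and let $M_k$ denote the $k$-th column of $M$. Then $$\mathbb{E}\big[\|REu_1\|_2^2\big]\le\frac{1}{(\lambda_2-\lambda_1)^2}\,\frac{1-p}{p}\Big(\sum_{k=1}^nu_1(k)^2\|M_k\|_2^2-\Big[2w_1^T\mathcal{M}w_1-\sum_{k=1}^nw_1(k)^2\mathcal{M}_{kk}\Big]\Big).$$ Moreover, if $\lambda_1=\|M\|_2$, then $$\mathbb{E}\big[\|REu_1\|_2^2\big]\le\frac{1}{(1-\lambda_2/\lambda_1)^2}\|u_1\|_\infty^2\frac{\mathrm{NumRank}(M)}{p},$$ where $\mathrm{NumRank}(M)=\|M\|_F^2/\|M\|_2^2$.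
   Context: $\circ$ is the Hadamard product, $\|\cdot\|_F$ the Frobenius norm, $\|\cdot\|_2$ the spectral (resp. Euclidean) norm, $\|x\|_\infty=\max_i|x_i|$. *)

From HB Require Import structures.
From mathcomp Require Import all_boot all_order all_algebra.
From mathcomp Require Import classical_sets reals.
Set Implicit Arguments. Unset Strict Implicit. Unset Printing Implicit Defensive.
Import Order.TTheory GRing.Theory Num.Theory.
Local Open Scope ring_scope.
Local Open Scope classical_set_scope.

Section Defs.
Variable R : realType.

Definition hadamard m n (A B : 'M[R]_(m, n)) : 'M[R]_(m, n) :=
  \matrix_(i, j) (A i j * B i j).

Definition vnorm2 n (x : 'cV[R]_n) : R := \sum_i (x i 0) ^+ 2.

Definition frob2 m n (A : 'M[R]_(m, n)) : R := \sum_i \sum_j (A i j) ^+ 2.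

Definition spec_norm m n (A : 'M[R]_(m, n)) : R :=
  sup [set Num.sqrt (vnorm2 (A *m x)) | x in [set x : 'cV[R]_n | vnorm2 x = 1]].

Definition vnorm_inf n (x : 'cV[R]_n) : R := \big[Num.max/0]_i `|x i 0|.

Definition NumRank n (A : 'M[R]_n) : R := frob2 A / (spec_norm A) ^+ 2.

(* The random symmetric matrix Q, given a Bernoulli pattern b on pairs (i,j)
   with i <= j: Q_ij = Q_ji = 1/p if b(min,max) else 0. *)
Definition Qmat n (p : R) (b : {ffun 'I_n * 'I_n -> bool}) : 'M[R]_n :=
  \matrix_(i, j) (if b (if (i <= j)%N then (i, j) else (j, i)) then p^-1 else 0).

(* Expectation of f(Q) where the entries Q_ij, i <= j, are independent,
   equal to 1/p with probability p and 0 otherwise. *)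
Definition EQ n (p : R) (f : 'M[R]_n -> R) : R :=
  \sum_(b : {ffun 'I_n * 'I_n -> bool} |
          [forall ij : 'I_n * 'I_n, (ij.2 < ij.1)%N ==> ~~ b ij])
    (\prod_(ij : 'I_n * 'I_n | (ij.1 <= ij.2)%N) (if b ij then p else 1 - p))
    * f (Qmat p b).

End Defs.

(** Write [Q = J + D] with [D] the centred noise, so that [E u1 = y] with
    [y_i = sum_k M_ik u1_k D_ik].  The reduced resolvent kills the
    [u1]-component and has norm at most [1/(lam2 - lam1)] on its complement,
    so [||R E u1||^2 <= (||y||^2 - (u1^T y)^2) / (lam2 - lam1)^2].  The entries
    [D_ik], [i <= k], are independent, centred, of variance [(1 - p)/p], hence
    both second moments are explicit sums: only the diagonal [(i,k) = (j,l)]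
    survives in [E ||y||^2], while [(i,k) = (l,j)] also contributes to
    [E (u1^T y)^2].  For the second bound drop the subtracted term and use
    [u1_k^2 <= ||u1||_inf^2] and [(1 - p)/p <= 1/p]. *)
From HB Require Import structures.
From mathcomp Require Import all_boot all_order all_algebra.
From mathcomp Require Import classical_sets reals.
From mathcomp Require Import ring lra zify.
From mathcomp Require Import boolp.
Import Order.TTheory GRing.Theory Num.Theory.
Set Implicit Arguments. Unset Strict Implicit. Unset Printing Implicit Defensive.
Local Open Scope ring_scope.

Section BernoulliExpectation.
Variables (R : realType) (n : nat) (p : R).
Local Notation pattern := {ffun 'I_n * 'I_n -> bool}.

Definition Ebern (h : pattern -> R) : R :=
  \sum_(b : pattern | [forall ij : 'I_n * 'I_n, (ij.2 < ij.1)%N ==> ~~ b ij])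
    (\prod_(ij : 'I_n * 'I_n | (ij.1 <= ij.2)%N) (if b ij then p else 1 - p))
    * h b.

Lemma EQE (f : 'M[R]_n -> R) : EQ p f = Ebern (fun b => f (Qmat p b)).
Proof. by []. Qed.

Lemma EbernD (h1 h2 : pattern -> R) :
  Ebern (fun b => h1 b + h2 b) = Ebern h1 + Ebern h2.
Proof. by rewrite /Ebern -big_split; apply: eq_bigr => b _; rewrite mulrDr. Qed.

Lemma EbernZ c (h : pattern -> R) : Ebern (fun b => c * h b) = c * Ebern h.
Proof. by rewrite /Ebern mulr_sumr; apply: eq_bigr => b _; rewrite mulrCA. Qed.

Lemma EbernN (h : pattern -> R) : Ebern (fun b => - h b) = - Ebern h.
Proof. by rewrite /Ebern -sumrN; apply: eq_bigr => b _; rewrite mulrN. Qed.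

Lemma Ebern_sum (I : finType) (P : pred I) (h : I -> pattern -> R) :
  Ebern (fun b => \sum_(i | P i) h i b) = \sum_(i | P i) Ebern (h i).
Proof. by rewrite /Ebern; under eq_bigr do rewrite mulr_sumr; rewrite exchange_big. Qed.

Lemma Ebern_prod (phi : 'I_n * 'I_n -> bool -> R) :
  Ebern (fun b => \prod_(ij : 'I_n * 'I_n | (ij.1 <= ij.2)%N) phi ij (b ij)) =
  \prod_(ij : 'I_n * 'I_n | (ij.1 <= ij.2)%N) (p * phi ij true + (1 - p) * phi ij false).
Proof.
rewrite /Ebern.
have -> : \prod_(ij : 'I_n * 'I_n | (ij.1 <= ij.2)%N)
      (p * phi ij true + (1 - p) * phi ij false) =
    \prod_(ij : 'I_n * 'I_n | (ij.1 <= ij.2)%N)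
      \sum_(x : bool | predT x) (if x then p else 1 - p) * phi ij x.
  by apply: eq_bigr => ij _; rewrite big_bool.
rewrite (big_distr_big_dep false) /=; apply: eq_big => [b|b _]; last first.
  by rewrite -big_split.
apply/idP/pfamilyP => [/forallP lowb0 | [/fintype.subsetP supp _]].
  split=> //; apply/fintype.subsetP => ij; rewrite !inE.
  by move: (lowb0 ij); case: (b ij) => //=; rewrite implybF -leqNgt.
apply/forallP => ij; apply/implyP => lt_ij; apply/negP => bij.
by have := supp ij; rewrite !inE bij unfold_in /= leqNgt lt_ij => /(_ isT).
Qed.

Lemma Ebern_cst c : Ebern (fun _ => c) = c.
Proof.
have Ebern1 : Ebern (fun _ => 1) = 1.
  have := Ebern_prod (fun _ _ => 1); rewrite big1_eq => ->.
  by rewrite big1 // => ij _; rewrite !mulr1 addrC subrK.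
rewrite -[RHS]mulr1 -Ebern1 -EbernZ; congr Ebern; apply: funext => b.
by rewrite mulr1.
Qed.

Hypotheses (p_gt0 : 0 < p) (p_le1 : p <= 1).

Lemma ler_Ebern (h1 h2 : pattern -> R) :
  (forall b, h1 b <= h2 b) -> Ebern h1 <= Ebern h2.
Proof.
move=> le_h; apply: ler_sum => b _; apply: ler_wpM2l => //.
by apply: prodr_ge0 => ij _; case: (b ij); [exact: ltW | rewrite subr_ge0].
Qed.

Lemma Ebern_ge0 (h : pattern -> R) : (forall b, 0 <= h b) -> 0 <= Ebern h.
Proof. by move=> h_ge0; rewrite -(Ebern_cst 0); apply: ler_Ebern. Qed.

Definition noise (x : bool) : R := (if x then p^-1 else 0) - 1.

Lemma prod_if_eq1 (I : finType) (P : pred I) (t : I) (F : I -> R) :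
  P t -> \prod_(s | P s) (if s == t then F s else 1) = F t.
Proof.
by move=> Pt; rewrite (bigD1 t) //= eqxx big1 ?mulr1 // => s /andP[_ /negbTE ->].
Qed.

Lemma Ebern_noise_mul (t1 t2 : 'I_n * 'I_n) :
  (t1.1 <= t1.2)%N -> (t2.1 <= t2.2)%N ->
  Ebern (fun b => noise (b t1) * noise (b t2)) = if t1 == t2 then (1 - p) / p else 0.
Proof.
move=> t1_up t2_up; have p_neq0 : p != 0 by rewrite gt_eqF.
pose phi s x := (if s == t1 then noise x else 1) * (if s == t2 then noise x else 1).
have -> : (fun b : pattern => noise (b t1) * noise (b t2)) =
    (fun b => \prod_(s : 'I_n * 'I_n | (s.1 <= s.2)%N) phi s (b s)).
  by apply: funext => b; rewrite big_split /= !prod_if_eq1.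
rewrite Ebern_prod (bigD1 t1) //= /phi eqxx /noise.
case: eqVneq => [<-|t12]; last by rewrite [X in X * _](_ : _ = 0) ?mul0r //; field.
rewrite big1 => [|s /andP[_ /negbTE ->]]; first by rewrite mulr1; field.
by rewrite !mulr1 addrC subrK.
Qed.

End BernoulliExpectation.

Section SymmetricNoise.
Variables (R : realType) (n : nat) (p : R).
Hypothesis p_gt0 : 0 < p.
Local Notation pattern := {ffun 'I_n * 'I_n -> bool}.

(** The coordinate of a pattern that governs the entry [(i, k)] of [Qmat]. *)
Definition sym_key (i k : 'I_n) : 'I_n * 'I_n := if (i <= k)%N then (i, k) else (k, i).

Lemma sym_key_le (i k : 'I_n) : ((sym_key i k).1 <= (sym_key i k).2)%N.
Proof. by rewrite /sym_key; case: (leqP i k) => //= /ltnW. Qed.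

Lemma eq_sym_key (i k j l : 'I_n) :
  (sym_key i k == sym_key j l) = ((j == i) && (l == k)) || ((j == k) && (l == i)).
Proof.
move: i k j l => [i ?] [k ?] [j ?] [l ?]; rewrite /sym_key /=.
by case: leqP => ?; case: leqP => ?; rewrite xpair_eqE -!val_eqE /=; apply/idP/idP; lia.
Qed.

Lemma eq_sym_key2 (i k l : 'I_n) : (sym_key i k == sym_key i l) = (l == k).
Proof.
rewrite eq_sym_key eqxx /=; case: (eqVneq l k) => //= lk.
by apply/negbTE/negP => /andP[/eqP ik /eqP li]; rewrite li ik eqxx in lk.
Qed.

Definition sym_noise (b : pattern) (i k : 'I_n) : R := noise p (b (sym_key i k)).

Lemma Ebern_sym_noise_mul (i k j l : 'I_n) :
  Ebern p (fun b => sym_noise b i k * sym_noise b j l) =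
  if sym_key i k == sym_key j l then (1 - p) / p else 0.
Proof. by rewrite Ebern_noise_mul // sym_key_le. Qed.

Lemma sum_mul_if_eq (F : 'I_n -> R) (k : 'I_n) (v : R) :
  \sum_l F l * (if l == k then v else 0) = F k * v.
Proof. by rewrite (bigD1 k) //= eqxx big1 ?addr0 // => l /negbTE->; rewrite mulr0. Qed.

Lemma sum2_mul_if_eq (F : 'I_n -> 'I_n -> R) (a c : 'I_n) (v : R) :
  \sum_j \sum_l F j l * (if (j == a) && (l == c) then v else 0) = F a c * v.
Proof.
rewrite (bigD1 a) //= eqxx sum_mul_if_eq big1 ?addr0 // => j /negbTE ja.
by apply: big1 => l _; rewrite ja mulr0.
Qed.

Lemma Ebern_sum_sqr_noise (a : 'I_n -> 'I_n -> R) :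
  Ebern p (fun b => \sum_i (\sum_k a i k * sym_noise b i k) ^+ 2) =
  (1 - p) / p * \sum_i \sum_k a i k ^+ 2.
Proof.
transitivity (Ebern p (fun b => \sum_i \sum_k \sum_l
    (a i k * a i l) * (sym_noise b i k * sym_noise b i l))).
  congr Ebern; apply: funext => b; apply: eq_bigr => i _.
  rewrite expr2 mulr_suml; apply: eq_bigr => k _; rewrite mulr_sumr.
  by apply: eq_bigr => l _; ring.
rewrite Ebern_sum mulr_sumr; apply: eq_bigr => i _.
rewrite Ebern_sum mulr_sumr; apply: eq_bigr => k _.
rewrite Ebern_sum.
under eq_bigr => l _ do rewrite EbernZ Ebern_sym_noise_mul eq_sym_key2.
by rewrite sum_mul_if_eq; ring.
Qed.

Lemma Ebern_sqr_sum_noise (a : 'I_n -> 'I_n -> R) :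
  Ebern p (fun b => (\sum_i \sum_k a i k * sym_noise b i k) ^+ 2) =
  (1 - p) / p * \sum_i \sum_k a i k * (a i k + if i == k then 0 else a k i).
Proof.
transitivity (Ebern p (fun b => \sum_i \sum_k \sum_j \sum_l
    (a i k * a j l) * (sym_noise b i k * sym_noise b j l))).
  congr Ebern; apply: funext => b; rewrite expr2 mulr_suml; apply: eq_bigr => i _.
  rewrite mulr_suml; apply: eq_bigr => k _; rewrite mulr_sumr.
  apply: eq_bigr => j _; rewrite mulr_sumr.
  by apply: eq_bigr => l _; ring.
rewrite Ebern_sum mulr_sumr; apply: eq_bigr => i _.
rewrite Ebern_sum mulr_sumr; apply: eq_bigr => k _.
rewrite Ebern_sum; under eq_bigr => j _ do rewrite Ebern_sum.
under eq_bigr => j _ do under eq_bigr => l _ do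
  rewrite EbernZ Ebern_sym_noise_mul eq_sym_key.
case: (eqVneq i k) => [<-|ik].
  under eq_bigr => j _ do under eq_bigr => l _ do rewrite orbb.
  by rewrite (sum2_mul_if_eq (fun j l => a i i * a j l)); ring.
have split_if (j l : 'I_n) :
    (if ((j == i) && (l == k)) || ((j == k) && (l == i)) then (1 - p) / p else 0) =
    (if (j == i) && (l == k) then (1 - p) / p else 0) +
    (if (j == k) && (l == i) then (1 - p) / p else 0).
  case: (eqVneq j i) => [->|] /=; case: (eqVneq l k) => [->|] //=;
    rewrite ?(negbTE ik) ?addr0 ?add0r //; case: (_ && _); rewrite ?addr0 ?add0r.
under eq_bigr => j _ do under eq_bigr => l _ do rewrite split_if mulrDr.
under eq_bigr => j _ do rewrite big_split.
by rewrite big_split /= !(sum2_mul_if_eq (fun j l => a i k * a j l)); ring.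
Qed.

End SymmetricNoise.

Section LinearAlgebra.
Variables (R : realType) (N : nat).

Lemma vnorm2E (x : 'cV[R]_N) : vnorm2 x = (x^T *m x) 0 0.
Proof. by rewrite /vnorm2 !mxE; apply: eq_bigr => i _; rewrite !mxE expr2. Qed.

Lemma vnorm2Z (a : R) (x : 'cV[R]_N) : vnorm2 (a *: x) = a ^+ 2 * vnorm2 x.
Proof. by rewrite /vnorm2 mulr_sumr; apply: eq_bigr => i _; rewrite mxE exprMn. Qed.

Lemma vnorm2_ge0 (x : 'cV[R]_N) : 0 <= vnorm2 x.
Proof. by apply: sumr_ge0 => i _; exact: sqr_ge0. Qed.

Lemma sum_scale_col_mul_tr (U : 'M[R]_N) (P : pred 'I_N) (d : 'I_N -> R) :
  \sum_(j | P j) d j *: (col j U *m (col j U)^T) =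
  U *m diag_mx (\row_j (if P j then d j else 0)) *m U^T.
Proof.
apply/matrixP => a b; rewrite summxE mul_mx_diag !mxE big_mkcond /=.
apply: eq_bigr => j _; rewrite !mxE big_ord1 !mxE.
by case: (P j); rewrite ?mulr0 ?mul0r // mulrA [d j * _]mulrC.
Qed.

Lemma vnorm2_col_orthonormal (U : 'M[R]_N) (j : 'I_N) :
  U^T *m U = 1%:M -> vnorm2 (col j U) = 1.
Proof.
move=> UU; transitivity ((U^T *m U) j j); last by rewrite UU mxE eqxx.
by rewrite mxE; apply: eq_bigr => k _; rewrite !mxE expr2.
Qed.

(** Applying [sum_(j != i0) d_j u_j u_j^T] removes the [u_i0]-component of [y]
    and multiplies the others by [d_j]; hence the Pythagorean bound. *)
Lemma vnorm2_deflated_mul_le (U : 'M[R]_N) (d : 'I_N -> R) (i0 : 'I_N)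
    (c : R) (y : 'cV[R]_N) :
  U^T *m U = 1%:M -> (forall j, j != i0 -> d j ^+ 2 <= c) ->
  vnorm2 ((\sum_(j | j != i0) d j *: (col j U *m (col j U)^T)) *m y)
   <= c * (vnorm2 y - ((col i0 U)^T *m y) 0 0 ^+ 2).
Proof.
move=> UU d_le; have UU' : U *m U^T = 1%:M by apply: mulmx1C.
rewrite sum_scale_col_mul_tr.
set e := \row_j (if j != i0 then d j else 0); set z := U^T *m y.
have -> : vnorm2 (U *m diag_mx e *m U^T *m y) =
    (z^T *m diag_mx (\row_j (e 0 j * e 0 j)) *m z) 0 0.
  rewrite vnorm2E -mulmx_diag !trmx_mul !trmxK tr_diag_mx /z !mulmxA.
  by rewrite -(mulmxA _ U^T U) UU mulmx1.
have -> : vnorm2 y = vnorm2 z.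
  by rewrite !vnorm2E /z trmx_mul trmxK mulmxA -(mulmxA y^T) UU' mulmx1.
have -> : ((col i0 U)^T *m y) 0 0 = z i0 0 by rewrite tr_col -row_mul mxE.
clearbody z; rewrite mul_mx_diag mxE /vnorm2 (bigD1 i0) //=.
rewrite [X in _ <= c * (X - _)](bigD1 i0) //= addrAC subrr add0r mulr_sumr.
rewrite !mxE eqxx /= !(mulr0, mul0r) add0r; apply: ler_sum => j j_i0.
rewrite !mxE j_i0; have := d_le j j_i0; have := sqr_ge0 (z j 0); nra.
Qed.

Lemma sqrt_vnorm2_le_spec_norm (M : 'M[R]_N) (x : 'cV[R]_N) :
  vnorm2 x = 1 -> Num.sqrt (vnorm2 (M *m x)) <= spec_norm M.
Proof.
move=> x1; apply: sup_upper_bound; last by exists x.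
split; first by exists (Num.sqrt (vnorm2 (M *m x))), x.
exists (Num.sqrt (\sum_i (\sum_j `|M i j|) ^+ 2)) => r [y y1 <-].
apply: ler_wsqrtr; apply: ler_sum => i _.
have y_le1 j : `|y j 0| <= 1.
  have : y j 0 ^+ 2 <= 1.
    by rewrite -y1 /vnorm2 (bigD1 j) //= lerDl sumr_ge0 // => k _; exact: sqr_ge0.
  by move=> ?; rewrite ler_norml; apply/andP; split; nra.
have : `|(M *m y) i 0| <= \sum_j `|M i j|.
  rewrite mxE; apply: le_trans (ler_norm_sum _ _ _) _; apply: ler_sum => j _.
  by rewrite normrM -[leRHS]mulr1 ler_wpM2l.
by rewrite ler_norml => /andP[? ?]; nra.
Qed.

Lemma sum_sqr_vnorm2_col_le (M : 'M[R]_N) (x : 'cV[R]_N) :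
  \sum_k x k 0 ^+ 2 * vnorm2 (col k M) <= vnorm_inf x ^+ 2 * frob2 M.
Proof.
rewrite /frob2 exchange_big mulr_sumr; apply: ler_sum => k _.
rewrite (_ : \sum_i _ = vnorm2 (col k M)); last by apply: eq_bigr => i _; rewrite mxE.
rewrite ler_wpM2r ?vnorm2_ge0 //.
have : `|x k 0| <= vnorm_inf x by apply: (le_bigmax 0 (fun i => `|x i 0|)).
by have := normr_ge0 (x k 0); rewrite ler_norml; nra.
Qed.

End LinearAlgebra.

Section ResolventBound.
Variables (R : realType) (n : nat) (M U : 'M[R]_n.+2) (lam : 'I_n.+2 -> R) (p : R).
Hypotheses (M_sym : M^T = M) (U_orth : U^T *m U = 1%:M)
  (lam_decr : forall i j : 'I_n.+2, (i < j)%N -> lam j < lam i)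
  (M_spectral : M = \sum_i lam i *: (col i U *m (col i U)^T))
  (p_gt0 : 0 < p) (p_le1 : p <= 1).
Local Notation pattern := {ffun 'I_n.+2 * 'I_n.+2 -> bool}.

Lemma lam_le_lam1 (j : 'I_n.+2) : j != 0 -> lam j <= lam 1.
Proof.
move=> j0; case: (eqVneq j 1) => [->|j1] //; apply/ltW/lam_decr.
by move: j0 j1; rewrite -!val_eqE /= (modn_small (isT : (1 < n.+2)%N)); lia.
Qed.

Lemma sqr_inv_gap_le (j : 'I_n.+2) :
  j != 0 -> ((lam j - lam 0)^-1) ^+ 2 <= ((lam 1 - lam 0) ^+ 2)^-1.
Proof.
move=> j0; have := lam_le_lam1 j0; have : lam 1 < lam 0 by apply: lam_decr.
by move=> ? ?; rewrite exprVn lef_pV2 ?posrE; nra.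
Qed.

Lemma centred_mulmx_u1 (b : pattern) :
  (hadamard M (Qmat p b) - M) *m col 0 U =
  \col_i \sum_k M i k * U k 0 * sym_noise p b i k.
Proof.
apply/matrixP => i j; rewrite !mxE (ord1 j); apply: eq_bigr => k _.
by rewrite !mxE /sym_noise /noise /sym_key; ring.
Qed.

Lemma EQ_resolvent_le :
  EQ p (fun Q => vnorm2 ((\sum_(j | j != 0) (lam j - lam 0)^-1 *:
                            (col j U *m (col j U)^T)) *m ((hadamard M Q - M) *m col 0 U)))
  <= ((lam 1 - lam 0) ^+ 2)^-1 *
     (Ebern p (fun b => \sum_i (\sum_k M i k * U k 0 * sym_noise p b i k) ^+ 2)
      - Ebern p (fun b => (\sum_i \sum_k U i 0 * M i k * U k 0 * sym_noise p b i k) ^+ 2)).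
Proof.
rewrite EQE -EbernN -EbernD -EbernZ; apply: ler_Ebern => // b.
have -> : \sum_i (\sum_k M i k * U k 0 * sym_noise p b i k) ^+ 2 =
    vnorm2 ((hadamard M (Qmat p b) - M) *m col 0 U).
  by rewrite centred_mulmx_u1; apply: eq_bigr => i _; rewrite mxE.
have -> : \sum_i \sum_k U i 0 * M i k * U k 0 * sym_noise p b i k =
    ((col 0 U)^T *m ((hadamard M (Qmat p b) - M) *m col 0 U)) 0 0.
  rewrite centred_mulmx_u1 mxE; apply: eq_bigr => i _; rewrite !mxE mulr_sumr.
  by apply: eq_bigr => k _; ring.
exact: vnorm2_deflated_mul_le U_orth sqr_inv_gap_le.
Qed.

Lemma Ebern_vnorm2_centred :
  Ebern p (fun b => \sum_i (\sum_k M i k * U k 0 * sym_noise p b i k) ^+ 2) =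
  (1 - p) / p * \sum_k (col 0 U k 0) ^+ 2 * vnorm2 (col k M).
Proof.
rewrite Ebern_sum_sqr_noise // exchange_big.
congr (_ * _); apply: eq_bigr => k _; rewrite /vnorm2 mulr_sumr.
by apply: eq_bigr => i _; rewrite !mxE; ring.
Qed.

(** Symmetry of [M] makes [a_ik := u1_i M_ik u1_k] symmetric, so the
    off-diagonal pairs [(i,k)], [(k,i)] share the same noise and count twice. *)
Lemma Ebern_quad_centred :
  let w := hadamard (col 0 U) (col 0 U) in
  Ebern p (fun b => (\sum_i \sum_k U i 0 * M i k * U k 0 * sym_noise p b i k) ^+ 2) =
  (1 - p) / p * (2 * (w^T *m hadamard M M *m w) 0 0
                 - \sum_k (w k 0) ^+ 2 * hadamard M M k k).
Proof.
move=> w; pose a i k := U i 0 * M i k * U k 0.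
have M_sym' i k : M k i = M i k by rewrite -{1}M_sym mxE.
rewrite Ebern_sqr_sum_noise //; congr (_ * _).
have -> : (w^T *m hadamard M M *m w) 0 0 = \sum_i \sum_k a i k ^+ 2.
  rewrite mxE; under eq_bigr => k _ do rewrite mxE mulr_suml.
  rewrite exchange_big; apply: eq_bigr => i _; apply: eq_bigr => k _.
  by rewrite !mxE /a; ring.
have -> : \sum_k w k 0 ^+ 2 * hadamard M M k k = \sum_k a k k ^+ 2.
  by apply: eq_bigr => k _; rewrite !mxE /a; ring.
transitivity (\sum_i \sum_k (2 * a i k ^+ 2 - (if k == i then a i k ^+ 2 else 0))).
  apply: eq_bigr => i _; apply: eq_bigr => k _; rewrite eq_sym /a.
  by case: eqVneq => [<-|_]; rewrite ?(M_sym' i k); ring.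
rewrite mulr_sumr -sumrB; apply: eq_bigr => i _.
by rewrite sumrB -big_mkcond big_pred1_eq mulr_sumr.
Qed.

Lemma spec_norm_lam0_neq0 : lam 0 = spec_norm M -> lam 0 != 0.
Proof.
move=> lam0_spec; apply/eqP => lam0.
have Mu2 : M *m col 1 U = lam 1 *: col 1 U.
  rewrite M_spectral sum_scale_col_mul_tr colE -!mulmxA (mulmxA U^T) U_orth mul1mx.
  rewrite scalemxAr; congr (_ *m _); apply/matrixP => i j; rewrite mul_diag_mx !mxE.
  by case: (eqVneq i 1) => [->|] //=; rewrite !mulr0.
have := sqrt_vnorm2_le_spec_norm M (vnorm2_col_orthonormal 1 U_orth).
rewrite Mu2 -lam0_spec lam0 vnorm2Z vnorm2_col_orthonormal // mulr1 sqrtr_sqr.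
rewrite normr_le0 => /eqP lam1_0.
by have := lam_decr (i := 0) (j := 1) isT; rewrite lam0 lam1_0 ltxx.
Qed.

End ResolventBound.

Unset Implicit Arguments. Set Strict Implicit.

Theorem theorem4 (R : realType) (n : nat) (M U : 'M[R]_n.+2) (lam : 'I_n.+2 -> R)
    (p : R) :
  M^T = M ->
  U^T *m U = 1%:M ->
  (forall i j : 'I_n.+2, (i < j)%N -> lam j < lam i) ->
  M = \sum_i lam i *: (col i U *m (col i U)^T) ->
  0 < p < 1 ->
  let u1 := col 0 U in
  let lam1 := lam 0 in
  let lam2 := lam 1 in
  let Rres := \sum_(j | j != 0) (lam j - lam1)^-1 *: (col j U *m (col j U)^T) in
  let E := fun Q : 'M[R]_n.+2 => hadamard M Q - M in
  let w1 := hadamard u1 u1 in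
  let MM := hadamard M M in
  let lhs := EQ p (fun Q => vnorm2 (Rres *m (E Q *m u1))) in
  lhs <= ((lam2 - lam1) ^+ 2)^-1 * ((1 - p) / p) *
         (\sum_k (u1 k 0) ^+ 2 * vnorm2 (col k M)
          - (2 * (w1^T *m MM *m w1) 0 0 - \sum_k (w1 k 0) ^+ 2 * MM k k))
  /\ (lam1 = spec_norm M ->
      lhs <= ((1 - lam2 / lam1) ^+ 2)^-1 * (vnorm_inf u1) ^+ 2 * (NumRank M / p)).
Proof.
move=> M_sym U_orth lam_decr M_spectral /andP[p_gt0 /ltW p_le1].
move=> u1 lam1 lam2 Rres E w1 MM lhs.
have lhs_le := EQ_resolvent_le M U_orth lam_decr p_gt0 p_le1.
rewrite (Ebern_vnorm2_centred M) // in lhs_le.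
split.
  by apply: le_trans lhs_le _; rewrite Ebern_quad_centred // -mulrBr mulrA.
move=> lam1_spec; apply: le_trans lhs_le _.
have lam1_neq0 := spec_norm_lam0_neq0 U_orth lam_decr M_spectral lam1_spec.
have gap_neq0 : lam2 - lam1 != 0 by rewrite subr_eq0 lt_eqF ?lam_decr.
set A := \sum_k _; set EZ := Ebern _ _; set F := frob2 M.
have A_le : A <= vnorm_inf u1 ^+ 2 * F by exact: sum_sqr_vnorm2_col_le.
have A_ge0 : 0 <= A by apply: sumr_ge0 => k _; rewrite mulr_ge0 ?sqr_ge0 ?vnorm2_ge0.
have EZ_ge0 : 0 <= EZ by apply: Ebern_ge0 => // b; exact: sqr_ge0.
have -> : (1 - p) / p = p^-1 - 1 by rewrite mulrBl mul1r divff ?gt_eqF.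
have pV_gt0 : 0 < p^-1 by rewrite invr_gt0.
apply: le_trans (_ : _ <= ((lam2 - lam1) ^+ 2)^-1 * (p^-1 * (vnorm_inf u1 ^+ 2 * F))) _.
  by rewrite ler_wpM2l ?invr_ge0 ?sqr_ge0 //; nra.
rewrite /NumRank -/F -lam1_spec le_eqVlt; apply/predU1P; left.
field; rewrite gt_eqF // lam1_neq0 gap_neq0 /=.
by rewrite subr_eq0 gt_eqF ?lam_decr.
Qed.
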